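(* Let $U$ be a Banach space and $(u_n)_{n\ge1}$ a convergent sequence in $U$. Let $A_1,A_2,\ldots\in\mathcal{L}(U)$ be bounded linear operators such that there exists $c<1$ with $\|A_nu\|\le c\|u\|$ for all $u\in U$ and all $n\ge1$, and such that for every $u\in U$ the sequence $(A_nu)_{n\ge1}$ converges in $U$. Let $(v_n)_{n\ge1}\subset U$ satisfy $v_{n+1}=A_nv_n+u_n$ for all $n\ge1$. Then $(v_n)_{n\ge1}$ converges in $U$. *)

From HB Require Import structures.
From mathcomp Require Import all_boot all_order all_algebra.
From mathcomp Require Import all_classical all_reals all_analysis.

From HB Require Import structures.
From mathcomp Require Import all_boot all_order all_algebra.
From mathcomp Require Import all_classical all_reals all_analysis.
From mathcomp Require Import lra.
Import Order.TTheory GRing.Theory Num.Theory.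
Import numFieldNormedType.Exports.
Local Open Scope ring_scope.
Local Open Scope classical_set_scope.

Set Implicit Arguments.
Unset Strict Implicit.

(* The operators converge pointwise to a map L which is again a contraction,
   so x |-> L x + lim u has a fixed point w by Banach's theorem.  The error
   e n = |v n - w| then satisfies e (n+1) <= c e n + d n with d n -> 0,
   and such a perturbed contractive recursion forces e n -> 0. *)

Lemma contractive_recursion_cvg0 (R : realType) (a d : nat -> R) (q : R) :
  0 <= q -> q < 1 -> (forall n, 0 <= a n) ->
  (forall n, a n.+1 <= q * a n + d n) -> d @ \oo --> 0 -> a @ \oo --> 0.
Proof.
move=> q0 q1 a0 ha hd; apply/cvgrPdist_lt => e e0.
have e2 : 0 < e / 2 by rewrite divr_gt0.
have eq0 : 0 < e / 2 * (1 - q) by rewrite mulr_gt0 // subr_gt0.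
move/cvgrPdist_lt: hd => /(_ _ eq0) [N _ dN_small].
have geometric_bound k : a (N + k)%N <= q ^+ k * a N + e / 2.
  elim: k => [|k IH]; first by rewrite addn0 expr0 mul1r lerDl ltW.
  rewrite addnS; apply: (le_trans (ha _)).
  have dN : d (N + k)%N <= e / 2 * (1 - q).
    have := dN_small (N + k)%N (leq_addr _ _); rewrite /= sub0r normrN => /ltW.
    exact: le_trans (ler_norm _).
  apply: (le_trans (lerD (ler_wpM2l q0 IH) dN)).
  by rewrite exprS mulrDr !mulrA mulrBr mulr1; lra.
have qn : `|q| < 1 by rewrite ger0_norm.
move/cvgrPdist_lt: (cvg_geometric (a N) qn) => /(_ _ e2) [M _ HM].
exists (N + M)%N => // n /= Hn.
have NleN : (N <= n)%N by rewrite (leq_trans (leq_addr _ _) Hn).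
rewrite sub0r normrN ger0_norm // -(subnKC NleN).
apply: (le_lt_trans (geometric_bound _)).
have := HM (n - N)%N; rewrite /= leq_subRL // => /(_ Hn).
rewrite sub0r normrN => /(le_lt_trans (ler_norm _)).
rewrite mulrC; lra.
Qed.

Section PointwiseLimitOfContractions.
Variables (R : realType) (U : normedModType R) (A : nat -> {linear U -> U}).
Variable c : R.
Hypothesis A_contract : forall n x, `|A n x| <= c * `|x|.
Hypothesis A_cvg : forall x, cvg ((fun n => A n x) @ \oo).

Definition pointwise_lim x := lim ((fun n => A n x) @ \oo).

Lemma pointwise_lim_cvg x : (fun n => A n x) @ \oo --> pointwise_lim x.
Proof. exact: A_cvg. Qed.

Lemma pointwise_lim_lipschitz x y :
  `|pointwise_lim x - pointwise_lim y| <= c * `|x - y|.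
Proof.
have lim_norm : `|A n x - A n y| @[n --> \oo] -->
    `|pointwise_lim x - pointwise_lim y|.
  by apply: cvg_norm; apply: cvgB; apply: pointwise_lim_cvg.
rewrite -(cvg_lim _ lim_norm); last exact: norm_hausdorff.
apply: limr_le; first by apply/cvg_ex; eexists; exact: lim_norm.
by apply: nearW => n /=; rewrite -linearB.
Qed.

End PointwiseLimitOfContractions.

Lemma pointwise_lim_affine_fixed_point (R : realType)
    (U : completeNormedModType R) (A : nat -> {linear U -> U}) (c : R) (b : U) :
  0 <= c -> c < 1 -> (forall n x, `|A n x| <= c * `|x|) ->
  (forall x, cvg ((fun n => A n x) @ \oo)) ->
  exists w, w = pointwise_lim A w + b.
Proof.
move=> c0 c1 A_contract A_cvg.
have f_contract : is_contraction (totalfun (fun x => pointwise_lim A x + b)).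
  exists (NngNum c0); split => //= -[x y] _ /=.
  rewrite opprD addrACA subrr addr0.
  exact: (pointwise_lim_lipschitz A_contract A_cvg).
have [w _ wfix] := banach_fixed_point f_contract (@closedT _) (ex_intro _ 0 I).
by exists w.
Qed.

Lemma cvg_dist0P (R : realType) (U : normedModType R) (x : nat -> U) (l : U) :
  x @ \oo --> l <-> `|x n - l| @[n --> \oo] --> 0.
Proof.
split=> [xl|d0].
  have : `|x n - l| @[n --> \oo] --> `|l - l|.
    by apply: cvg_norm; apply: cvgB => //; exact: cvg_cst.
  by rewrite subrr normr0.
have : (x n - l + l) @[n --> \oo] --> 0 + l.
  by apply: cvgD; [exact/norm_cvg0P | exact: cvg_cst].
rewrite add0r; apply: cvg_trans; apply: near_eq_cvg.
by apply: nearW => n /=; rewrite subrK.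
Qed.

Theorem lemmaA1 (R : realType) (U : completeNormedModType R)
  (u : nat -> U) (A : nat -> {linear U -> U}) (v : nat -> U) (c : R) :
  cvg (u @ \oo) ->
  c < 1 ->
  (forall (n : nat) (x : U), `|A n x| <= c * `|x|) ->
  (forall x : U, cvg ((fun n => A n x) @ \oo)) ->
  (forall n : nat, v n.+1 = A n (v n) + u n) ->
  cvg (v @ \oo).
Proof.
move=> cu c1 hA cA hv.
pose q := Num.max c 0.
have q0 : 0 <= q by rewrite le_max lexx orbT.
have q1 : q < 1 by rewrite gt_max c1 ltr01.
have hAq n x : `|A n x| <= q * `|x|.
  by apply: (le_trans (hA n x)); rewrite ler_wpM2r // le_max lexx.
pose L := pointwise_lim A.
have [w wfix] := pointwise_lim_affine_fixed_point (lim (u @ \oo)) q0 q1 hAq cA.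
have err_step n : v n.+1 - w = A n (v n - w) + (A n w - L w) + (u n - lim (u @ \oo)).
  rewrite hv linearB /= [in LHS]wfix.
  rewrite -[A n (v n) - A n w + _]addrA (addrA (- A n w)) addNr add0r.
  by rewrite opprD !addrA (addrAC (A n (v n)) (u n)).
pose d n := `|A n w - L w| + `|u n - lim (u @ \oo)|.
have err_rec n : `|v n.+1 - w| <= q * `|v n - w| + d n.
  rewrite err_step /d [in leRHS]addrA; apply: (le_trans (ler_normD _ _)).
  rewrite lerD2r; apply: (le_trans (ler_normD _ _)); rewrite lerD2r.
  exact: hAq.
have d0 : d @ \oo --> 0.
  rewrite -[0]addr0; apply: cvgD; apply: (iffLR (cvg_dist0P _ _)); [exact: cA | exact: cu].
apply/cvg_ex; exists w; apply/cvg_dist0P.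
exact: contractive_recursion_cvg0 q0 q1 (fun=> normr_ge0 _) err_rec d0.
Qed.
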